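(* For every $n\ge 1$, the graph $\widehat{G}_n$ is connected, has maximum degree $3$, has $|V(\widehat{G}_n)| = 6\cdot 4^{n-1}$ vertices, and satisfies $$Z(\widehat{G}_n)\ \ge\ t_n+1=\frac{8\cdot 4^{n-1}+1}{3}\ =\ \Big(\frac49+\frac{1}{18\cdot 4^{n-1}}\Big)|V(\widehat{G}_n)|\ \ge\ \frac49\,|V(\widehat{G}_n)|.$$ In particular, the statement ''$Z(G)\le \frac13|V(G)|+2$ for every connected graph $G$ of maximum degree $3$'' is false.
   Context: Zero forcing: given a graph and a set $S$ of vertices initially colored black (all others white), repeatedly apply the rule: if a black vertex $v$ has exactly one white neighbor $u$, then $u$ becomes black. $S$ is a zero forcing set if eventually every vertex becomes black. $Z(G)$ is the minimum size of a zero forcing set of $G$. Subdivided $K_4$: the complete graph on 4 vertices $a,b,c,e$ with the edge $ab$ subdivided by a new vertex $s$ (5 vertices, edges $as, sb, ac, ae, bc, be, ce$); $s$ is its subdivision vertex. $B_d$ ($d\ge1$) is the complete binary tree with $2^d-1$ vertices and root $r$. $G_n$ ($n\ge1$): take $B_{2n-1}$ with root $r_n$, and for every leaf $\ell$ of $B_{2n-1}$ attach a new copy of the subdivided $K_4$ by identifying $\ell$ with its subdivision vertex. $\widehat{G}_n$ is obtained from $G_n$ by adding a new vertex $y_n$ adjacent only to $r_n$. $t_1=2$, $t_{n+1}=4t_n+2$ for $n\ge1$. *)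

From HB Require Import structures.
From mathcomp Require Import all_boot all_order all_algebra.
Set Implicit Arguments. Unset Strict Implicit. Unset Printing Implicit Defensive.

Section Graphs.
Variables (T : finType) (e : rel T).

Definition force_step (B : {set T}) : {set T} :=
  B :|: [set u | [exists v, [&& v \in B, e v u, u \notin B &
                     [forall w, (e v w && (w \notin B)) ==> (w == u)]]]].

(* Final colouring obtained from S (the process stabilises after #|T| rounds). *)
Definition zf_closure (S : {set T}) : {set T} := iter #|T| force_step S.

Definition zero_forcing_set (S : {set T}) : bool := zf_closure S == [set: T].

(* Z(G): minimum size of a zero forcing set (setT is always one). *)
Definition Z : nat := \big[minn/#|T|]_(S : {set T} | zero_forcing_set S) #|S|.

Definition connected_graph : Prop := forall x y : T, connect e x y.

Definition degree (v : T) : nat := #|[set w | e v w]|.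
Definition max_degree : nat := \max_(v : T) degree v.

End Graphs.

(* B_{2n-1} has 2^(2n-1) - 1 vertices, with heap indexing: tree ordinal i stands
   for heap index i+1, root = heap index 1, children of p are 2p and 2p+1.
   Its leaves are the heap indices 4^(n-1) + j, j < 4^(n-1).
   Gadget vertices (j, k): copy of the subdivided K4 attached at leaf j,
   with k = 0,1,2,3 standing for a, b, c, e (s is identified with leaf j).
   None is the extra vertex y_n. *)
Definition tree_size (n : nat) : nat := 2 ^ (n.*2.-1) - 1.
Definition nleaves (n : nat) : nat := 4 ^ n.-1.

Definition Vhat (n : nat) : finType :=
  option ('I_(tree_size n) + ('I_(nleaves n) * 'I_4)).

Definition tree_adj (i j : nat) : bool :=
  (j.+1 == i.+1 * 2) || (j.+1 == (i.+1 * 2).+1) ||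
  (i.+1 == j.+1 * 2) || (i.+1 == (j.+1 * 2).+1).

(* tree vertex i is the leaf identified with the subdivision vertex of gadget j,
   adjacent to a (k=0) and b (k=1) *)
Definition leaf_gadget_adj (n : nat) (i j k : nat) : bool :=
  (i == nleaves n + j - 1) && (k < 2).

(* inside a gadget: edges ac, ae, bc, be, ce (all pairs of {a,b,c,e} but ab) *)
Definition gadget_adj (j k j' k' : nat) : bool :=
  (j == j') && (k != k') && ~~ ((k < 2) && (k' < 2)).

Definition ghat_adj (n : nat) : rel (Vhat n) :=
  fun x y =>
    match x, y with
    | None, Some (inl i) => val i == 0
    | Some (inl i), None => val i == 0
    | Some (inl i), Some (inl i') => tree_adj i i'
    | Some (inl i), Some (inr p) => leaf_gadget_adj n i p.1 p.2
    | Some (inr p), Some (inl i) => leaf_gadget_adj n i p.1 p.2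
    | Some (inr p), Some (inr p') => gadget_adj p.1 p.2 p'.1 p'.2
    | _, _ => false
    end.

(* t_1 = 2, t_{n+1} = 4 t_n + 2 (t 0 is an unused convention). *)
Fixpoint t (n : nat) : nat :=
  match n with
  | 0 => 0
  | m.+1 => if m == 0 then 2 else 4 * t m + 2
  end.

(* A set S cannot be zero forcing if it is disjoint from a fort: a nonempty set
   F of vertices such that no vertex outside F has exactly one neighbour in F,
   because then no vertex of F is ever forced.  We show that every S with
   |S| <= t_n is disjoint from a fort of \hat G_n.

   Call a tree vertex h at distance 2(m-1) from the leaves a vertex of level m,
   and count the vertices of S lying in the subtree of h, gadgets included.
   By induction on m: either S misses a fort, or this count is at least t_m,
   with equality only if some F containing h and disjoint from S is a fort
   except possibly at the parent of h (a hanging fort).  At a leaf this is a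
   case analysis on its gadget, whose twin pairs {a, b} and {c, e} are forts.
   Two levels up, hanging forts at both children of a child u of h combine
   through u into a fort; so each child of h carries at least 2 t_m + 1
   vertices of S below it, whence t_{m+1} = 4 t_m + 2.  In case of equality
   h is not in S, and one hanging fort below each child of h together with h
   form a hanging fort at h.  At the root, adding y closes a hanging fort. *)

From HB Require Import structures.
From mathcomp Require Import all_boot all_order all_algebra.
From mathcomp Require Import zify ring.
Import GRing.Theory Num.Theory.

Set Implicit Arguments.
Unset Strict Implicit.
Unset Printing Implicit Defensive.

Section Graphs.
Variables (T : finType) (e : rel T).
Implicit Types (B F S : {set T}) (v x : T).

Definition fort_at (F : {set T}) (v : T) : Prop :=
  v \notin F -> forall x, x \in F -> e v x -> exists2 x', x' \in F & (x' != x) && e v x'.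

Definition fort (F : {set T}) : Prop := F != set0 /\ forall v, fort_at F v.

Definition misses_fort (S : {set T}) : Prop := exists2 F, fort F & F \subset ~: S.

Lemma fort_atU F1 F2 v : fort_at F1 v -> fort_at F2 v -> fort_at (F1 :|: F2) v.
Proof.
rewrite /fort_at in_setU negb_or => P1 P2 /andP[v1 v2] x.
case/setUP => [x1|x2] vx.
  by have [x' x'1 ?] := P1 v1 x x1 vx; exists x'; rewrite ?in_setU ?x'1.
by have [x' x'2 ?] := P2 v2 x x2 vx; exists x'; rewrite ?in_setU ?x'2 ?orbT.
Qed.

Lemma fort_at_nbr0 F v : (forall x, x \in F -> ~~ e v x) -> fort_at F v.
Proof. by move=> nvF _ x /nvF/negbTE->. Qed.

Lemma fort_at_nbr2 F v y1 y2 :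
  y1 != y2 -> y1 \in F -> y2 \in F -> e v y1 -> e v y2 -> fort_at F v.
Proof.
move=> y12 y1F y2F vy1 vy2 _ x _ _.
have [<-|y1x] := eqVneq y1 x; first by exists y2; rewrite // eq_sym y12.
by exists y1; rewrite ?y1x.
Qed.

Lemma fort_at_nbrs F v (s : seq T) :
  uniq s -> 1 < size s -> all (e v) s -> {subset s <= F} -> fort_at F v.
Proof.
case: s => [|y1 [|y2 s]] //= /andP[y1s _] _ /and3P[vy1 vy2 _] sF.
apply: (fort_at_nbr2 (y1 := y1) (y2 := y2)); rewrite ?sF ?inE ?eqxx ?orbT //.
by apply: contraNneq y1s => ->; rewrite inE eqxx.
Qed.

Lemma fort_atU1 F y v : (forall w, e w y -> w \in F) ->
  (v != y -> fort_at F v) -> fort_at (y |: F) v.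
Proof.
move=> nbrs_y fortF; rewrite /fort_at in_setU1 negb_or => /andP[vy vF] x.
case/setU1P=> [->|xF] vx; first by rewrite nbrs_y in vF.
by have [x' x'F ?] := fortF vy vF x xF vx; exists x'; rewrite ?in_setU1 ?x'F ?orbT.
Qed.

Lemma fort_twins y1 y2 : y1 != y2 ->
  (forall v, v != y1 -> v != y2 -> e v y1 = e v y2) -> fort [set y1; y2].
Proof.
move=> y12 twins; split; first by apply/set0Pn; exists y1; rewrite !inE eqxx.
move=> v vF x xF vx.
have [vy1 vy2] : v != y1 /\ v != y2 by apply/andP; move: vF; rewrite !inE negb_or.
have same := twins v vy1 vy2.
have vy : e v y1 by move: xF vx; rewrite !inE => /orP[] /eqP-> //; rewrite same.
have in1 : y1 \in [set y1; y2] by rewrite !inE eqxx.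
have in2 : y2 \in [set y1; y2] by rewrite !inE eqxx orbT.
by apply: (fort_at_nbr2 y12 in1 in2 vy _ vF xF vx); rewrite -same.
Qed.

Lemma fort_not_zero_forcing F S :
  fort F -> F \subset ~: S -> ~~ zero_forcing_set e S.
Proof.
case=> /set0Pn[x0 x0F] fortF FS.
have stuck k x : x \in F -> x \notin iter k (force_step e) S.
  elim: k x => [|k IH] x xF /=; first by move/subsetP/(_ x xF): FS; rewrite inE.
  rewrite /force_step in_setU negb_or IH //= inE; apply/existsP => -[v].
  case/and4P=> v_black vx _ /forallP only_x.
  have vF : v \notin F by apply: contraL v_black; apply: IH.
  have [x' x'F /andP[x'x vx']] := fortF v vF x xF vx.
  by move: (only_x x'); rewrite vx' IH //= (negbTE x'x).
by apply/eqP => /setP/(_ x0); rewrite inE (negbTE (stuck _ x0 x0F)).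
Qed.

Lemma Z_gt_misses_fort k : (forall S : {set T}, #|S| <= k -> misses_fort S) -> k < Z e.
Proof.
move=> small; rewrite /Z; apply: (big_ind (fun m => k < m)).
- rewrite ltnNge; apply/negP => cardT.
  have [F [/set0Pn[x xF] _] FS] := small setT (leq_trans (eq_leq (cardsT T)) cardT).
  by move/subsetP/(_ x xF): FS; rewrite setCT inE.
- by move=> m1 m2; rewrite leq_min => -> ->.
move=> S zfS; rewrite ltnNge; apply/negP => /small[F fortF FS].
by move: zfS; apply/negP; apply: fort_not_zero_forcing fortF FS.
Qed.

Lemma degree_le_size v (s : seq T) : (forall w, e v w -> w \in s) -> degree e v <= size s.
Proof.
move=> nbrs; apply: leq_trans (card_size s); apply: subset_leq_card.
by apply/subsetP => w; rewrite inE => /nbrs.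
Qed.

Lemma connected_graph_of_root r : symmetric e -> (forall x, connect e x r) -> connected_graph e.
Proof.
move=> sym_e to_r x y; apply: connect_trans (to_r x) _.
by rewrite (sym_connect_sym sym_e).
Qed.

Lemma sum_eq_mem B y : \sum_(x in B) (x == y) = (y \in B).
Proof.
case: (boolP (y \in B)) => yB.
  by rewrite (bigD1 y) //= eqxx big1 // => x /andP[_ /negbTE->].
by rewrite big1 // => x xB; case: eqP => // xy; rewrite -xy xB in yB.
Qed.

Lemma count_le_sum B (s : seq T) (f : pred T) :
  uniq s -> all f s -> count (mem B) s <= \sum_(x in B) f x.
Proof.
move=> uniq_s all_f; rewrite -big_mkcondr sum1dep_card -size_filter.
have /card_uniqP <- : uniq [seq x <- s | mem B x] by rewrite filter_uniq.
apply/subset_leq_card/subsetP => x.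
by rewrite mem_filter !inE => /andP[xB /(allP all_f) fx]; apply/andP.
Qed.

End Graphs.

Lemma count_le_subset (T : eqType) (a : pred T) (s1 s2 : seq T) :
  uniq s1 -> {subset s1 <= s2} -> count a s1 <= count a s2.
Proof.
move=> uniq_s1 sub12; rewrite -!size_filter; apply: uniq_leq_size; first exact: filter_uniq.
by move=> x; rewrite !mem_filter => /andP[-> /sub12].
Qed.

(* [h] is [a] with its last [d] binary digits dropped, i.e. a heap ancestor of
   [a] or [a] itself; exponents [d <= a] suffice since [a %/ 2 ^ d = 0] beyond. *)
Definition ancestor (h a : nat) : bool := [exists d : 'I_a.+1, a %/ 2 ^ d == h].

Lemma ancestorP h a : reflect (exists d, a %/ 2 ^ d = h) (ancestor h a).
Proof.
apply: (iffP existsP) => [[d /eqP]|[d <-]]; first by exists d.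
have a_lt m : a <= m -> a %/ 2 ^ m = 0.
  by move=> le_am; rewrite divn_small // (leq_ltn_trans le_am (ltn_expl m (isT : 1 < 2))).
have [le_da|le_ad] := leqP d a; first by exists (Ordinal (le_da : d < a.+1)).
by exists ord_max; rewrite /= !a_lt // ltnW.
Qed.

Lemma ancestor_le h a : ancestor h a -> h <= a.
Proof. by case/ancestorP=> d <-; apply: leq_div. Qed.

Lemma ancestor_refl a : ancestor a a.
Proof. by apply/ancestorP; exists 0; rewrite divn1. Qed.

Lemma ancestor_trans g h a : ancestor h g -> ancestor g a -> ancestor h a.
Proof.
case/ancestorP=> d1 <- /ancestorP[d2 <-]; apply/ancestorP; exists (d2 + d1).
by rewrite expnD divnMA.
Qed.

Lemma ancestor_child h r : r < 2 -> ancestor h (h.*2 + r).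
Proof.
by move=> r2; apply/ancestorP; exists 1; rewrite expn1 -muln2 divnMDl // divn_small ?addn0.
Qed.

Lemma ancestor_eq g g' a : 0 < g -> ancestor g a -> ancestor g' a -> g <= g' < g.*2 -> g' = g.
Proof.
move=> g_gt0 /ancestorP[d Eg] /ancestorP[d' Eg'] /andP[le_gg' lt_g'g].
have [le_dd'|lt_d'd] := leqP d d'.
  move: Eg'; rewrite -(subnKC le_dd') expnD divnMA Eg.
  case: (d' - d) => [|k]; first by rewrite divn1.
  rewrite expnS divnMA => Eg'.
  by have := leq_div (g %/ 2) (2 ^ k); lia.
move: Eg; rewrite -(subnKC (ltnW lt_d'd)) expnD divnMA Eg'.
case: (d - d') lt_d'd => [|k] _; first by rewrite divn1.
rewrite expnS divnMA => Eg.
by have := leq_div (g' %/ 2) (2 ^ k); lia.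
Qed.

Lemma ancestor_split h a : 0 < h ->
  (a == h) + ancestor h.*2 a + ancestor h.*2.+1 a <= ancestor h a.
Proof.
move=> h_gt0; have [->|_] := eqVneq a h.
  have below_child r : ancestor (h.*2 + r) h = false.
    by apply/negbTE/negP => /ancestor_le; lia.
  by move: (below_child 0) (below_child 1); rewrite addn0 addn1 ancestor_refl => -> ->.
have up0 := ancestor_trans (ancestor_child h (isT : 0 < 2)).
have up1 := ancestor_trans (ancestor_child h (isT : 1 < 2)).
rewrite addn0 addn1 in up0 up1.
case: (boolP (ancestor h.*2 a)) => [anc0|_]; case: (boolP (ancestor h.*2.+1 a)) => [anc1|_] //=.
- by have := ancestor_eq _ anc0 anc1; lia.
- by rewrite up0.
- by rewrite up1.
Qed.

Section Ghat.
Variable N : nat.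

Local Notation V := (Vhat N).
Local Notation adj := (@ghat_adj N).
Local Notation L := (nleaves N).
Local Notation ts := (tree_size N).
Implicit Types (j : 'I_L) (v w x : V).

Lemma nleaves_gt0 : 0 < L.
Proof. by rewrite expn_gt0. Qed.

(* Heap index [p] names tree vertex [p - 1]; index 0 (and any index out of
   range) names y, which thereby becomes the parent of the root 1. *)
Definition node (p : nat) : V :=
  if p is q.+1 then oapp (fun i => Some (inl i)) None (insub q : option 'I_ts) else None.

Definition gadget (j : 'I_L) (k : nat) : V := Some (inr (j, inord k)).

(* The heap index of the tree vertex carrying [x]: a gadget vertex is carried
   by its leaf and y by index 0. *)
Definition anchor (x : V) : nat :=
  match x with None => 0 | Some (inl i) => i.+1 | Some (inr p) => L + p.1 end.

Lemma node_ord (i : 'I_ts) : node i.+1 = Some (inl i).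
Proof. by rewrite /node valK. Qed.

Lemma gadget_ord j (k : 'I_4) : Some (inr (j, k)) = gadget j k.
Proof. by rewrite /gadget inord_val. Qed.

Lemma nodeP p : 0 < p <= ts -> exists2 i : 'I_ts, p = i.+1 & node p = Some (inl i).
Proof.
by case: p => // q /= lt_q; exists (Ordinal lt_q); last exact: (node_ord (Ordinal lt_q)).
Qed.

Lemma anchor_node p : 0 < p <= ts -> anchor (node p) = p.
Proof. by case/nodeP => i -> ->. Qed.

Lemma node_neq p q : 0 < p <= ts -> 0 < q <= ts -> p != q -> node p != node q.
Proof.
by move=> /anchor_node Ep /anchor_node Eq; apply: contra_neq => /(congr1 anchor); rewrite Ep Eq.
Qed.

Lemma node_neq_gadget p j k : node p != gadget j k.
Proof. by case: p => //= q; case: insub. Qed.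

Lemma gadget_neq j k k' : k < 4 -> k' < 4 -> k != k' -> gadget j k != gadget j k'.
Proof.
by move=> k4 k'4; apply: contra_neq => -[] /(congr1 val) /=; rewrite !inordK.
Qed.

Lemma ghat_sym : symmetric adj.
Proof.
move=> [[i|[j k]]|] [[i'|[j' k']]|] //=; rewrite /tree_adj /gadget_adj /=.
- by case: (_ == _); case: (_ == _); case: (_ == _); case: (_ == _).
- by rewrite (eq_sym (nat_of_ord j)) (eq_sym (nat_of_ord k)) (andbC (k' < 2)).
Qed.

Lemma ghat_irr : irreflexive adj.
Proof.
move=> [[i|[j k]]|] //=; last by rewrite /gadget_adj !eqxx.
by apply/negP; rewrite /tree_adj => /orP[/orP[/orP[]|]|] /eqP; lia.
Qed.

Lemma adj_node p q : p <= ts -> 0 < q <= ts ->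
  adj (node p) (node q) = (p == q./2) || (q == p./2).
Proof.
move=> pts /nodeP[i' -> ->]; case: p pts => [|p] pts; first by rewrite /= -eqSS; lia.
have [|i -> ->] := @nodeP p.+1; first lia.
by rewrite /= /tree_adj; apply/idP/idP; lia.
Qed.

Lemma adj_gadget j j' k k' : k < 4 -> k' < 4 ->
  adj (gadget j k) (gadget j' k') = [&& j == j', k != k' & ~~ ((k < 2) && (k' < 2))].
Proof. by move=> k4 k'4; rewrite /= /gadget_adj /= !inordK // andbA. Qed.

Lemma adj_gadget01 v j : adj v (gadget j 0) = adj v (gadget j 1).
Proof.
case: v => [[i|[j' [[|[|[|[|k]]]] k4]]]|] //=;
  by rewrite /leaf_gadget_adj /gadget_adj /= ?inordK ?andbF ?andbT.
Qed.

Lemma adj_gadget23 v j : v != gadget j 2 -> v != gadget j 3 ->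
  adj v (gadget j 2) = adj v (gadget j 3).
Proof.
case: v => [[i|[j' k]]|] //=; rewrite /leaf_gadget_adj /gadget_adj /= !inordK //.
rewrite gadget_ord => n2 n3; case: eqP => [/val_inj Ej|_] //; subst j'.
by case: k n2 n3 => -[|[|[|[|]]]] //= k4; rewrite !eqxx.
Qed.

Lemma nbr_node0 w : adj w (node 0) -> w = node 1.
Proof. by case: w => [[i|//]|//] /= /eqP i0; rewrite -node_ord i0. Qed.

Hypothesis N_gt0 : 0 < N.

Lemma tree_sizeE : ts = L.*2.-1.
Proof.
case: N N_gt0 => // n _.
by rewrite /tree_size /nleaves doubleS /= expnS -mul2n expnM subn1 mul2n.
Qed.

Lemma leaf_range (j : 'I_L) :
  [/\ 0 < L + j <= ts, ts < (L + j).*2 & (L + j)./2 < L].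
Proof. by rewrite tree_sizeE; have := ltn_ord j; split; lia. Qed.

Lemma adj_gadget_leaf j k : k < 4 -> adj (gadget j k) (node (L + j)) = (k < 2).
Proof.
move=> k4; have [leaf_j _ _] := leaf_range j; have [i Ei ->] := nodeP leaf_j.
by rewrite /= /leaf_gadget_adj /= inordK // Ei subn1 eqxx.
Qed.

Lemma nbr_node p v : 0 < p <= ts -> adj v (node p) ->
  [\/ v = node p./2, p.*2 <= ts /\ v = node p.*2, p.*2.+1 <= ts /\ v = node p.*2.+1
    | exists2 j : 'I_L, p = L + j & exists2 k, k < 2 & v = gadget j k].
Proof.
move=> p_in; case: v => [[i|[j k]]|] vp.
- have i_lt := ltn_ord i.
  move: vp; rewrite -node_ord ghat_sym adj_node; [|lia|lia] => /orP[/eqP Ep|/eqP Ei].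
  + have [Ei|Ei] : i.+1 = p.*2 \/ i.+1 = p.*2.+1 by lia.
    * by apply: Or42; rewrite -Ei.
    * by apply: Or43; rewrite -Ei.
  + by apply: Or41; rewrite Ei.
- move: vp; have [i -> ->] := nodeP p_in; rewrite /= /leaf_gadget_adj.
  case/andP=> /eqP Ei k2; apply: Or44; exists j; first by have := nleaves_gt0; lia.
  by exists k; rewrite ?gadget_ord.
- by apply: Or41; move: vp; have [i -> ->] := nodeP p_in => /= /eqP ->.
Qed.

(* For k = 2, 3 the index 5 - k is the other one of c, e. *)
Definition gadget_nbrs (j : 'I_L) (k : nat) : seq V :=
  if k < 2 then [:: node (L + j); gadget j 2; gadget j 3]
  else [:: gadget j 0; gadget j 1; gadget j (5 - k)].

Lemma adj_gadget_of_nbrs j k w : k < 4 -> w \in gadget_nbrs j k -> adj (gadget j k) w.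
Proof.
move=> k4; rewrite /gadget_nbrs.
by case: ifP => k2; rewrite !inE => /or3P[] /eqP->;
  rewrite ?adj_gadget_leaf ?adj_gadget ?eqxx //; lia.
Qed.

Lemma nbr_gadget j k v : k < 4 -> adj v (gadget j k) ->
  (k < 2 /\ v = node (L + j)) \/
  exists2 k', k' < 4 & [&& k' != k, ~~ ((k' < 2) && (k < 2)) & v == gadget j k'].
Proof.
move=> k4; have L_gt0 := nleaves_gt0.
case: v => [[i|[j' k']]|] //=; rewrite /leaf_gadget_adj /gadget_adj /= inordK //.
- case/andP=> /eqP Ei k2; left; split=> //; rewrite -node_ord; congr node; lia.
- case/andP=> /andP[/eqP Ej k'k] k'k2; right; exists k' => //.
  by rewrite k'k k'k2 gadget_ord; apply/eqP; congr gadget; apply: val_inj.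
Qed.

Lemma nbrs_of_adj_gadget j k w : k < 4 -> adj (gadget j k) w -> w \in gadget_nbrs j k.
Proof.
move=> k4.
rewrite ghat_sym /gadget_nbrs => /(nbr_gadget k4)[[-> ->]|[k' k'4 /and3P[k'k k2 /eqP->]]].
  by rewrite inE eqxx.
case: ifPn => k_lt2; rewrite !inE.
  have [->|->] : k' = 2 \/ k' = 3 by lia.
  + by apply/or3P/Or32/eqxx.
  + by apply/or3P/Or33/eqxx.
have [->|[->|->]] : k' = 0 \/ k' = 1 \/ k' = 5 - k by lia.
- by apply/or3P/Or31/eqxx.
- by apply/or3P/Or32/eqxx.
- by apply/or3P/Or33/eqxx.
Qed.

Lemma uniq_gadget_nbrs j k : k < 4 -> uniq (gadget j k :: gadget_nbrs j k).
Proof.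
move=> k4; rewrite cons_uniq (contraFN (@adj_gadget_of_nbrs _ _ _ k4)) ?ghat_irr //=.
rewrite /gadget_nbrs; case: ifP => k2;
  by rewrite /= !inE !negb_or ?node_neq_gadget !gadget_neq //; lia.
Qed.

Lemma card_Vhat : #|V| = 6 * L.
Proof.
rewrite card_option card_sum card_prod !card_ord tree_sizeE.
by have := nleaves_gt0; lia.
Qed.

Lemma connect_node0 p : p <= ts -> connect adj (node p) (node 0).
Proof.
elim/ltn_ind: p => -[_ _|p IH pts]; first exact: connect0.
apply: connect_trans (connect1 _) (IH p.+1./2 _ _); try lia.
by rewrite ghat_sym adj_node ?eqxx //; lia.
Qed.

Lemma ghat_connected : connected_graph adj.
Proof.
apply: (connected_graph_of_root (r := node 0) ghat_sym) => -[[i|[j k]]|]; last exact: connect0.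
  by rewrite -node_ord; apply: connect_node0; have := ltn_ord i.
have [leaf_j _ _] := leaf_range j.
have to_leaf k' : k' < 2 -> connect adj (gadget j k') (node 0).
  move=> k'2; apply: connect_trans (connect1 _) (connect_node0 (p := L + j) _); last lia.
  by rewrite adj_gadget_leaf //; lia.
rewrite gadget_ord; case: k => -[|[|[|[|]]]] // k4; try exact: to_leaf;
  by apply: connect_trans (connect1 _) (to_leaf 0 _); rewrite ?adj_gadget ?eqxx.
Qed.

Lemma degree_ghat_le3 v : degree adj v <= 3.
Proof.
case: v => [[i|[j k]]|].
- rewrite -node_ord; have p_in : 0 < i.+1 <= ts by have := ltn_ord i.
  move: i.+1 p_in => {i} p p_in; have [p_inner|p_leaf] := ltnP p L.
    apply: (degree_le_size (s := [:: node p./2; node p.*2; node p.*2.+1])) => w.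
    rewrite ghat_sym => /(nbr_node p_in)[->|[_ ->]|[_ ->]|[j Ej _]];
      by rewrite ?inE ?eqxx ?orbT //; lia.
  have ts_lt : ts < p.*2 by rewrite tree_sizeE; lia.
  have j_lt : p - L < L by move: p_in; rewrite tree_sizeE; lia.
  set j := Ordinal j_lt.
  apply: (degree_le_size (s := [:: node p./2; gadget j 0; gadget j 1])) => w.
  rewrite ghat_sym => /(nbr_node p_in)[->|[? _]|[? _]|[j' Ej' [k k2 ->]]];
    rewrite ?inE ?eqxx //; try lia.
  have -> : j' = j by apply: val_inj => /=; lia.
  by case: k k2 => [|[|]] // _; rewrite eqxx ?orbT.
- rewrite gadget_ord; apply: leq_trans (degree_le_size (s := gadget_nbrs j k) _) _.
    by move=> w; apply: nbrs_of_adj_gadget (ltn_ord k).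
  by rewrite /gadget_nbrs; case: ifP.
- apply: leq_trans (degree_le_size (s := [:: node 1]) _) _ => // -[[i|//]|//] /= /eqP i0.
  by rewrite inE -node_ord i0.
Qed.

Lemma max_degree_ghat : max_degree adj = 3.
Proof.
apply/eqP; rewrite eqn_leq; apply/andP; split.
  by apply/bigmax_leqP => v _; apply: degree_ghat_le3.
set j := Ordinal nleaves_gt0.
have nbrs : uniq [:: gadget j 0; gadget j 1; gadget j 3].
  by rewrite /= !inE !negb_or !gadget_neq.
apply: leq_trans (leq_bigmax (gadget j 2)).
rewrite -[3]/(size [:: gadget j 0; gadget j 1; gadget j 3]) -(card_uniqP nbrs).
by apply/subset_leq_card/subsetP => w; rewrite !inE => /or3P[] /eqP->; rewrite adj_gadget ?eqxx.
Qed.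

Definition block (j : 'I_L) : seq V :=
  [:: node (L + j); gadget j 0; gadget j 1; gadget j 2; gadget j 3].

Lemma uniq_block j : uniq (block j).
Proof. by rewrite /= !inE !negb_or !node_neq_gadget !gadget_neq. Qed.

Lemma gadget_in_block j k : k < 4 -> gadget j k \in block j.
Proof. by case: k => [|[|[|[|]]]] // _; rewrite !inE eqxx ?orbT. Qed.

Lemma gadget_nbrs_sub_block j k : {subset gadget_nbrs j k <= block j}.
Proof.
rewrite /gadget_nbrs => w; case: ifPn => k2; rewrite mem_seq3 => /or3P[] /eqP->;
  rewrite ?mem_head ?gadget_in_block //; lia.
Qed.

Lemma anchor_block j x : x \in block j -> anchor x = L + j.
Proof.
have [leaf_j _ _] := leaf_range j.
by rewrite inE => /orP[/eqP->|]; [rewrite anchor_node | rewrite !inE => /or4P[] /eqP->].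
Qed.

Lemma block_closed j v x : x \in block j -> adj v x -> v != node (L + j)./2 -> v \in block j.
Proof.
have [leaf_j ts_lt _] := leaf_range j.
rewrite inE => /orP[/eqP->|x_gadget] vx v_par.
  case/(nbr_node leaf_j): vx => [v_eq|[? _]|[? _]|[j' Ej' [k k2 ->]]]; try lia.
    by rewrite v_eq eqxx in v_par.
  by rewrite (_ : j' = j) ?gadget_in_block //; [lia | apply: val_inj => /=; lia].
have [k k4 Ex] : exists2 k, k < 4 & x = gadget j k.
  by move: x_gadget; rewrite !inE => /or4P[] /eqP->; [exists 0|exists 1|exists 2|exists 3].
by move: vx; rewrite Ex ghat_sym => /(nbrs_of_adj_gadget k4)/gadget_nbrs_sub_block.
Qed.

Section SmallSets.
Variable S : {set V}.

Definition below (h : nat) : nat := \sum_(x in S) ancestor h (anchor x).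

Lemma below_root : below 1 + (node 0 \in S) <= #|S|.
Proof.
rewrite -sum_eq_mem -sum1_card /below -big_split; apply: leq_sum => x _.
have [->|_] := eqVneq x (node 0); last by case: ancestor.
by have := @ancestor_le 1 0; case: ancestor => // /(_ isT).
Qed.

Lemma below_split h : 0 < h -> h.*2.+1 <= ts ->
  (node h \in S) + below h.*2 + below h.*2.+1 <= below h.
Proof.
move=> h_gt0 h_in; rewrite -sum_eq_mem /below -!big_split; apply: leq_sum => x _ /=.
have : (x == node h) <= (anchor x == h).
  by have [->|] := eqVneq x (node h); rewrite ?anchor_node ?eqxx //; lia.
by have := ancestor_split (anchor x) h_gt0; lia.
Qed.

Lemma below_leaf j : count (mem S) (block j) <= below (L + j).
Proof.
apply: count_le_sum (uniq_block j) _.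
by apply/allP => x /anchor_block->; apply: ancestor_refl.
Qed.

Definition hanging (h : nat) : Prop :=
  exists F : {set V},
    [/\ node h \in F, F \subset ~: S & forall v, v != node h./2 -> fort_at adj F v].

Lemma misses_fort_root : hanging 1 -> node 0 \notin S -> misses_fort adj S.
Proof.
case=> F [F1 FS fortF] S0; exists (node 0 |: F).
  split=> [|v]; first by apply/set0Pn; exists (node 0); rewrite !inE eqxx.
  by apply: fort_atU1 => [w /nbr_node0->|]; last exact: fortF.
by rewrite subUset sub1set inE S0.
Qed.

Lemma misses_fort_children u : 0 < u -> u.*2.+1 <= ts ->
  hanging u.*2 -> hanging u.*2.+1 -> misses_fort adj S.
Proof.
move=> u_gt0 u_in [F1 [in1 FS1 fort1]] [F2 [in2 FS2 fort2]].
exists (F1 :|: F2); last by rewrite subUset FS1.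
split=> [|v]; first by apply/set0Pn; exists (node u.*2); rewrite inE in1.
have [->|v_u] := eqVneq v (node u).
  apply: (fort_at_nbr2 (y1 := node u.*2) (y2 := node u.*2.+1));
    rewrite ?inE ?in1 ?in2 ?orbT ?node_neq ?adj_node //; lia.
by apply: fort_atU; [apply: fort1 | apply: fort2]; rewrite (_ : _./2 = u) //; lia.
Qed.

Lemma hanging_up h a b : 0 < h -> (h.*2.+1).*2.+1 <= ts -> node h \notin S ->
  a./2 = h.*2 -> b./2 = h.*2.+1 -> hanging a -> hanging b -> hanging h.
Proof.
move=> h_gt0 h_in hS Ea Eb [Fa [ina FSa forta]] [Fb [inb FSb fortb]].
exists (node h |: (Fa :|: Fb)); split; first by rewrite !inE eqxx.
  by rewrite !subUset sub1set inE hS FSa FSb.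
have [h_lt a_in b_in] : [/\ h < L, 0 < a <= ts & 0 < b <= ts].
  by move: h_in; rewrite tree_sizeE; have := nleaves_gt0; split; lia.
have node_h_neq c : 0 < c <= ts -> h.*2 <= c./2 -> node h != node c.
  by move=> c_in le_c; apply: node_neq => //; lia.
move=> v v_par; have [->|v2h] := eqVneq v (node h.*2).
  apply: (fort_at_nbr2 (y1 := node h) (y2 := node a)); rewrite ?inE ?eqxx ?ina ?orbT //.
  - by rewrite node_h_neq ?Ea.
  - by rewrite adj_node ?doubleK ?eqxx ?orbT //; lia.
  - by rewrite adj_node ?Ea ?eqxx //; lia.
have [->|v2h1] := eqVneq v (node h.*2.+1).
  apply: (fort_at_nbr2 (y1 := node h) (y2 := node b)); rewrite ?inE ?eqxx ?inb ?orbT //.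
  - by rewrite node_h_neq ?Eb.
  - by rewrite adj_node /= ?uphalf_double ?eqxx ?orbT //; lia.
  - by rewrite adj_node ?Eb ?eqxx //; lia.
apply: fort_atU; last apply: fort_atU.
- apply: fort_at_nbr0 => x; rewrite inE => /eqP->; apply/negP.
  have h_in' : 0 < h <= ts by lia.
  case/(nbr_node h_in') => [v_eq|[_ v_eq]|[_ v_eq]|[j Ej _]].
  + by rewrite v_eq eqxx in v_par.
  + by rewrite v_eq eqxx in v2h.
  + by rewrite v_eq eqxx in v2h1.
  + by move: h_lt; rewrite Ej; lia.
- by apply: forta; rewrite Ea.
- by apply: fortb; rewrite Eb.
Qed.

Lemma misses_fort_gadget01 j :
  gadget j 0 \notin S -> gadget j 1 \notin S -> misses_fort adj S.
Proof.
move=> g0 g1; exists [set gadget j 0; gadget j 1]; last by rewrite subUset !sub1set !inE g0 g1.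
by apply: fort_twins => [|v _ _]; rewrite ?gadget_neq ?adj_gadget01.
Qed.

Lemma misses_fort_gadget23 j :
  gadget j 2 \notin S -> gadget j 3 \notin S -> misses_fort adj S.
Proof.
move=> g2 g3; exists [set gadget j 2; gadget j 3]; last by rewrite subUset !sub1set !inE g2 g3.
by apply: fort_twins => [|v]; rewrite ?gadget_neq //; apply: adj_gadget23.
Qed.

Lemma hanging_leaf j : node (L + j) \notin S -> count (mem S) (block j) <= 2 -> hanging (L + j).
Proof.
move=> leafS budget; exists [set x in block j | x \notin S]; split.
- by rewrite inE mem_head leafS.
- by apply/subsetP => x; rewrite !inE => /andP[_ ->].
move=> v v_par; have [vB|vB] := boolP (v \in block j); last first.
  apply: fort_at_nbr0 => x; rewrite inE => /andP[xB _].
  by apply: contra vB => vx; apply: block_closed xB vx v_par.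
have [vS|vS] := boolP (v \in S); last by rewrite /fort_at inE vB vS.
have [k k4 Ev] : exists2 k, k < 4 & v = gadget j k.
  move: vB vS; rewrite inE => /orP[/eqP-> |]; first by rewrite (negbTE leafS).
  by rewrite !inE => /or4P[] /eqP-> _; [exists 0|exists 1|exists 2|exists 3].
have /andP[_ uniq_nbrs] := uniq_gadget_nbrs j k4.
have nbrsS : count (mem S) (gadget_nbrs j k) <= 1.
  have sub : {subset gadget j k :: gadget_nbrs j k <= block j}.
    by move=> y; rewrite inE => /orP[/eqP->|/gadget_nbrs_sub_block//]; exact: gadget_in_block.
  have := leq_trans (count_le_subset (mem S) (uniq_gadget_nbrs j k4) sub) budget.
  by rewrite /= -Ev vS.
rewrite Ev; apply: (fort_at_nbrs (s := [seq y <- gadget_nbrs j k | y \notin S])).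
- exact: filter_uniq.
- by rewrite size_filter; move: nbrsS; rewrite /gadget_nbrs; case: ifP => _ /=; lia.
- by apply/allP => y; rewrite mem_filter => /andP[_ /adj_gadget_of_nbrs]; apply.
- by move=> y; rewrite mem_filter in_set => /andP[-> /gadget_nbrs_sub_block->].
Qed.

Definition fort_or_heavy (k h : nat) : Prop :=
  misses_fort adj S \/ k <= below h /\ (below h = k -> hanging h).

Lemma fort_or_heavy_leaf j : fort_or_heavy 2 (L + j).
Proof.
have := below_leaf j; rewrite /= => below_j.
have [le1|gt1] := leqP (count (mem S) (behead (block j))) 1; last first.
  move: gt1; rewrite /= => gt1; right; split=> [|below2]; first lia.
  apply: hanging_leaf; last by rewrite /=; lia.
  by apply/negP => leafS; move: below_j; rewrite leafS; lia.
left; move: le1 => /=.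
case: (boolP (gadget j 0 \in S)) => g0; case: (boolP (gadget j 1 \in S)) => g1; last first.
  by move=> _; apply: misses_fort_gadget01 g0 g1.
all: case: (boolP (gadget j 2 \in S)) => g2; case: (boolP (gadget j 3 \in S)) => g3 //= _.
all: exact: misses_fort_gadget23 g2 g3.
Qed.

Lemma fort_or_heavy_pair k u : 0 < u -> u.*2.+1 <= ts ->
  fort_or_heavy k u.*2 -> fort_or_heavy k u.*2.+1 ->
  misses_fort adj S \/ k.*2.+1 <= below u.*2 + below u.*2.+1 /\
    (below u.*2 + below u.*2.+1 = k.*2.+1 -> exists2 a, a./2 = u & hanging a).
Proof.
move=> u_gt0 u_in [fort1|[ge1 hang1]]; first by left.
move=> [fort2|[ge2 hang2]]; first by left.
have [e1|ne1] := eqVneq (below u.*2) k; have [e2|ne2] := eqVneq (below u.*2.+1) k.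
- by left; apply: misses_fort_children u_gt0 u_in (hang1 e1) (hang2 e2).
- right; split=> [|_]; first lia.
  by exists u.*2; [exact: doubleK | exact: hang1].
- right; split=> [|_]; first lia.
  by exists u.*2.+1; [exact: uphalf_double | exact: hang2].
- by right; split=> [|sum_eq]; [lia | exfalso; lia].
Qed.

Lemma fort_or_heavy_up k h : 0 < h -> (h.*2.+1).*2.+1 <= ts ->
  (forall a, a./2./2 = h -> fort_or_heavy k a) -> fort_or_heavy (4 * k + 2) h.
Proof.
move=> h_gt0 h_in grand.
have pair u : u./2 = h -> misses_fort adj S \/ k.*2.+1 <= below u.*2 + below u.*2.+1 /\
    (below u.*2 + below u.*2.+1 = k.*2.+1 -> exists2 a, a./2 = u & hanging a).
  move=> Eu; apply: fort_or_heavy_pair; try lia; apply: grand.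
    by rewrite doubleK Eu.
  by rewrite /= uphalf_double Eu.
have [fort|[lo1 hang1]] := pair h.*2 (doubleK h); first by left.
have [fort|[lo2 hang2]] := pair h.*2.+1 (uphalf_double h); first by left.
have split0 := @below_split h h_gt0 (ltac:(lia)).
have split1 := @below_split h.*2 (ltac:(lia)) (ltac:(lia)).
have split2 := @below_split h.*2.+1 (ltac:(lia)) h_in.
right; split=> [|heavy]; first lia.
have hS : node h \notin S by apply/negP => hS; move: split0; rewrite hS; lia.
have [a Ea ha] := hang1 (ltac:(lia)).
have [b Eb hb] := hang2 (ltac:(lia)).
exact: hanging_up h_gt0 h_in hS Ea Eb ha hb.
Qed.

Lemma fort_or_heavy_level m h :
  0 < m <= N -> 4 ^ (N - m) <= h < (4 ^ (N - m)).*2 -> fort_or_heavy (t m) h.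
Proof.
elim: m h => [//|[|m] IH] h /andP[_ mN] h_range.
  have j_lt : h - L < L by move: h_range; rewrite /nleaves subn1; lia.
  rewrite (_ : h = L + Ordinal j_lt); first exact: fort_or_heavy_leaf.
  by move: h_range; rewrite /nleaves subn1 /=; lia.
have pow : 4 ^ (N - m.+1) = 4 * 4 ^ (N - m.+2) by rewrite -expnS; congr expn; lia.
have pow_le : 4 ^ (N - m.+1) <= L by apply: leq_pexp2l; lia.
apply: fort_or_heavy_up => [||a Ea]; first lia.
  by rewrite tree_sizeE; lia.
by apply: IH; lia.
Qed.

Lemma misses_fort_small : #|S| <= t N -> misses_fort adj S.
Proof.
move=> small.
have [//|[heavy hang]] : fort_or_heavy (t N) 1.
  by apply: fort_or_heavy_level; rewrite ?subnn //; lia.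
have := below_root; case: (boolP (node 0 \in S)) => S0 below_S; first lia.
by apply: misses_fort_root S0; apply: hang; lia.
Qed.

End SmallSets.

Lemma Z_ghat : t N < Z adj.
Proof. exact: Z_gt_misses_fort misses_fort_small. Qed.

End Ghat.

Lemma t_closed_form n : 0 < n -> 3 * (t n + 1) = 8 * 4 ^ n.-1 + 1.
Proof.
elim: n => [//|[|n] IH _] //; have -> : t n.+2 = 4 * t n.+1 + 2 by [].
by move: (IH isT); rewrite /= expnS; lia.
Qed.

Lemma t_ratio n : 0 < n ->
  ((t n + 1)%:R : rat) = ((4%:R / 9%:R + 1 / (18 * 4 ^ n.-1)%:R) * (#|Vhat n|)%:R)%R.
Proof.
move=> n_gt0; rewrite card_Vhat // /nleaves.
have L_gt0 : ((4 ^ n.-1)%:R != 0 :> rat)%R by rewrite pnatr_eq0 -lt0n expn_gt0.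
have -> : ((t n + 1)%:R = (8 * 4 ^ n.-1 + 1)%:R / 3%:R :> rat)%R.
  by rewrite -t_closed_form // natrM mulrC mulKf.
by rewrite !natrM !natrD; field; rewrite L_gt0.
Qed.

Lemma t_ratio_ge n : 0 < n -> (4%:R / 9%:R * (#|Vhat n|)%:R <= ((t n + 1)%:R : rat))%R.
Proof.
move=> n_gt0; rewrite t_ratio //; apply: ler_wpM2r; first exact: ler0n.
by rewrite lerDl divr_ge0 ?ler0n.
Qed.

Theorem mainTheorem2 :
  (forall n : nat, 1 <= n ->
     [/\ connected_graph (@ghat_adj n),
         max_degree (@ghat_adj n) = 3,
         #|Vhat n| = 6 * 4 ^ n.-1,
         (t n + 1 <= Z (@ghat_adj n))%N
       & [/\ (3 * (t n + 1) = 8 * 4 ^ n.-1 + 1)%N,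
             ((t n + 1)%:R : rat)
               = ((4%:R / 9%:R + 1 / (18 * 4 ^ n.-1)%:R) * (#|Vhat n|)%:R)%R
           & (4%:R / 9%:R * (#|Vhat n|)%:R <= ((t n + 1)%:R : rat))%R]]) /\
  ~ (forall (T : finType) (e : rel T),
       symmetric e -> irreflexive e ->
       connected_graph e -> max_degree e = 3 ->
       (3 * Z e <= #|T| + 6)%N).
Proof.
split=> [n n_gt0|bound].
  split; [exact: ghat_connected | exact: max_degree_ghat | exact: card_Vhat |
          rewrite addn1; exact: Z_ghat | ].
  by split; [exact: t_closed_form | exact: t_ratio | exact: t_ratio_ge].
have := bound _ _ (@ghat_sym 2) (@ghat_irr 2) (ghat_connected (isT : 0 < 2))
  (max_degree_ghat (isT : 0 < 2)).
by rewrite card_Vhat //; have := @Z_ghat 2 isT; rewrite /nleaves /=; lia.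
Qed.
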